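(* Define $C(2)=1$ and $C(N)=\frac N2\left(2C(N-1)+1\right)$ for $N\ge 3$. Let $N\ge 3$ and let $\Sigma=(\sigma_1,\dots,\sigma_n)$ be a symbolic collision sequence on the vertex set $\{1,\dots,N\}$ which is $C(N)$-rich. Then there exist a label $k\in\{1,\dots,N\}$ and two indices $1\le p<q\le n$ such that: (i) $k\in\sigma_p\cap\sigma_q$; (ii) $k\notin\bigcup_{j=p+1}^{q-1}\sigma_j$; (iii) if $\sigma_p=\sigma_q$, then there exists $j$ with $p<j<q$ and $\sigma_p\cap\sigma_j\neq\emptyset$; (iv) the sequence $\Sigma'$ obtained from $\Sigma$ by deleting all $\sigma_j$ containing $k$ is $\left(2C(N-1)+1\right)$-rich on the vertex set $\{1,\dots,N\}\setminus\{k\}$.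
   Context: A symbolic collision sequence on a finite vertex set $V$ is a finite sequence $\Sigma=(\sigma_1,\dots,\sigma_n)$ of unordered pairs $\sigma_j=\{a,b\}$ of distinct elements of $V$ (listed in time order). For a positive number $C$, $\Sigma$ is called $C$-rich on $V$ if there are at least $C$ pairwise disjoint blocks of consecutive indices $[a_1,b_1],[a_2,b_2],\dots$ with $b_1<a_2$, $b_2<a_3$, etc., such that for each block the graph with vertex set $V$ and edge set $\{\sigma_j: a_i\le j\le b_i\}$ is connected. *)

From HB Require Import structures.
From mathcomp Require Import all_boot all_order all_algebra.
Set Implicit Arguments. Unset Strict Implicit. Unset Printing Implicit Defensive.
Import Order.TTheory GRing.Theory Num.Theory.

(* The constant C(N): C(2) = 1, C(N) = N/2 (2 C(N-1) + 1) for N >= 3.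
   Values at N = 0, 1 are irrelevant (set to 1). *)
Fixpoint Cconst (n : nat) : rat :=
  match n with
  | 0 | 1 | 2 => 1%R
  | m.+1 => ((m.+1)%:R / 2 * (2 * Cconst m + 1))%R
  end.

Definition is_collision (T : finType) (e : {set T}) : bool := #|e| == 2.

Definition graph_connected (T : finType) (V : {set T}) (E : seq {set T}) : Prop :=
  forall x y, x \in V -> y \in V ->
    connect (fun u v : T => has (fun e : {set T} => (u \in e) && (v \in e) && (u != v)) E) x y.

(* The block of consecutive indices [a, b] (0-based) of the sequence s. *)
Definition block (T : finType) (s : seq {set T}) (a b : nat) : seq {set T} :=
  [seq nth set0 s j | j <- iota a (b - a).+1].

Definition rich (T : finType) (C : rat) (V : {set T}) (s : seq {set T}) : Prop :=
  exists (m : nat) (a b : nat -> nat),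
    (C <= m%:R)%R /\
    (forall i, i < m -> a i <= b i /\ b i < size s) /\
    (forall i, i.+1 < m -> b i < a i.+1) /\
    (forall i, i < m -> graph_connected V (block s (a i) (b i))).

(* In a connected graph, a vertex at maximal distance from a root is not a cut
   vertex; starting again from that vertex gives a second one. So each of the
   C(N) connected blocks has two labels whose removal, with all collisions through
   them, keeps the block connected, and double counting yields a label k that is
   removable in at least 2 C(N) / N = 2 C(N-1) + 1 blocks: this is (iv).
   For (i)-(iii), k occurs in the first and the third block. If every two
   consecutive occurrences of k were the same collision, met by nothing in
   between, then every collision between these occurrences would either be that
   collision or be disjoint from it, and the connected second block could never
   leave it. *)

From Stdlib Require Import Classical_Prop.
From HB Require Import structures.
From mathcomp Require Import all_boot all_order all_algebra.
From mathcomp Require Import zify lra.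
Import Order.TTheory GRing.Theory Num.Theory.

Set Implicit Arguments. Unset Strict Implicit. Unset Printing Implicit Defensive.

Lemma connect_exit (T : finType) (e : rel T) (A : pred T) x y :
  connect e x y -> A x -> ~~ A y -> exists u v, [/\ A u, ~~ A v & e u v].
Proof.
move=> /connectP [p pp ->]; elim: p x pp => [|z p IH] x /=; first by move=> _ ->.
case/andP=> exz pz Ax; case Az: (A z); first exact: IH.
by move=> _; exists x, z; rewrite Az.
Qed.

Section FarVertex.
Variables (T : finType) (e : rel T) (r : T).
Hypothesis connect_root : forall v, connect e r v.

Fixpoint ball n : {set T} :=
  if n is n'.+1 then ball n' :|: [set v | [exists u in ball n', e u v]] else [set r].

Lemma path_ball p : path e r p -> last r p \in ball (size p).
Proof.
elim/last_ind: p => [|p x IH]; first by rewrite inE.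
rewrite rcons_path last_rcons size_rcons => /andP [pp ex] /=.
by rewrite !inE; apply/orP; right; apply/existsP; exists (last r p); rewrite IH.
Qed.

Lemma ball_exists v : exists n, v \in ball n.
Proof.
by case/connectP: (connect_root v) => p pp ->; exists (size p); apply: path_ball.
Qed.

Definition dist v := ex_minn (ball_exists v).

Lemma dist_ball v : v \in ball (dist v).
Proof. by rewrite /dist; case: ex_minnP. Qed.

Lemma dist_min v n : v \in ball n -> dist v <= n.
Proof. by rewrite /dist; case: ex_minnP => d _ dmin /dmin. Qed.

Lemma dist_eq0 v : (dist v == 0) = (v == r).
Proof.
apply/eqP/eqP => [d0|->]; first by have := dist_ball v; rewrite d0 inE => /eqP.
by apply/eqP; rewrite -leqn0 dist_min // inE.
Qed.

Lemma dist_pred v : 0 < dist v -> exists2 u, dist u < dist v & e u v.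
Proof.
have := dist_ball v; case Ev: (dist v) => [|n] //= + _.
rewrite inE => /orP [/dist_min | ]; first by rewrite Ev ltnn.
by rewrite inE => /exists_inP [u /dist_min un euv]; exists u.
Qed.

Definition far_vertex := [arg max_(v > r) dist v].

Lemma dist_far v : dist v <= dist far_vertex.
Proof. by rewrite /far_vertex; case: arg_maxnP => // w _; apply. Qed.

Lemma far_vertex_neq v : v != r -> far_vertex != r.
Proof.
rewrite -!dist_eq0 -!lt0n => vr.
exact: leq_trans vr (dist_far v).
Qed.

(* Shortest paths to a vertex other than the far vertex stay strictly closer to
   the root than the far vertex, hence avoid it. *)
Lemma connect_avoid_far v : v != far_vertex ->
  connect [rel x y | [&& e x y, x != far_vertex & y != far_vertex]] r v.
Proof.
have [n] := ubnP (dist v); elim: n v => // n IH v dvn vw.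
have [/eqP|dv0] := posnP (dist v); first by rewrite dist_eq0 => /eqP->.
have [u ud euv] := dist_pred dv0.
have uw : u != far_vertex.
  by apply: contraTneq (dist_far v) => <-; rewrite -ltnNge.
apply: connect_trans (IH u _ uw) (connect1 _); first exact: leq_trans ud dvn.
by rewrite /= euv uw vw.
Qed.

End FarVertex.

Section Collisions.
Variable T : finType.
Implicit Types (E : seq {set T}) (f : {set T}) (V : {set T}).

Definition edge_rel E : rel T :=
  fun u v => has (fun f : {set T} => (u \in f) && (v \in f) && (u != v)) E.

Definition graph_connectedb V E :=
  [forall x in V, forall y in V, connect (edge_rel E) x y].

Lemma graph_connectedP V E : reflect (graph_connected V E) (graph_connectedb V E).
Proof.
apply: (iffP forall_inP) => [conn x y xV yV | conn x xV].
  exact: forall_inP (conn x xV) y yV.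
by apply/forall_inP => y yV; apply: conn.
Qed.

Lemma edge_rel_sym E : symmetric (edge_rel E).
Proof. by move=> u v; apply: eq_has => f /=; rewrite [in X in X && _]andbC eq_sym. Qed.

Lemma connected_mem_edge V E x y : graph_connected V E ->
  x \in V -> y \in V -> x != y -> exists2 f, f \in E & x \in f.
Proof.
move=> conn xV yV xy; have yx : ~~ pred1 x y by rewrite /= eq_sym.
have [u [v [/eqP-> _ /hasP [f fE /andP [/andP [xf _] _]]]]] :=
  connect_exit (A := pred1 x) (conn x y xV yV) (eqxx x) yx.
by exists f.
Qed.

Lemma collision_eq2 f u v :
  is_collision f -> u \in f -> v \in f -> u != v -> f = [set u; v].
Proof.
move=> /eqP f2 uf vf uv; apply/esym/eqP.
rewrite eqEcard cards2 uv f2 andbT; apply/subsetP => z.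
by rewrite !inE => /orP [] /eqP->.
Qed.

Lemma edge_rel_filter E w u v : all (@is_collision _) E ->
  edge_rel E u v -> u != w -> v != w ->
  edge_rel [seq f <- E | w \notin (f : {set T})] u v.
Proof.
move=> collE /hasP [f fE /andP [/andP [uf vf] uv]] uw vw.
apply/hasP; exists f; last by rewrite uf vf uv.
rewrite mem_filter fE andbT (collision_eq2 (allP collE f fE) uf vf uv).
by rewrite !inE !(eq_sym w) negb_or uw vw.
Qed.

Definition removable E w :=
  graph_connectedb (setT :\ w) [seq f <- E | w \notin (f : {set T})].

Lemma removable_neq E r : all (@is_collision _) E -> 1 < #|T| ->
  graph_connected setT E -> exists2 w, w != r & removable E w.
Proof.
move=> collE /card_gt1P [x [y [_ _ xy]]] conn.
have root v : connect (edge_rel E) r v by apply: conn.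
have [v vr] : exists v, v != r.
  by case: (eqVneq x r) => [<-|]; [exists y; rewrite eq_sym | exists x].
set w := far_vertex root.
have avoid u : u != w -> connect (edge_rel [seq f <- E | w \notin (f : {set T})]) r u.
  move/connect_avoid_far; apply: connect_sub => a b.
  by case/and3P => eab aw bw; apply: connect1; apply: edge_rel_filter.
exists w; first exact: (far_vertex_neq root vr).
apply/graph_connectedP => a b; rewrite !inE !andbT => aw bw.
apply: connect_trans (avoid b bw).
by rewrite (sym_connect_sym (@edge_rel_sym _)); apply: avoid.
Qed.

Lemma card_removable E : all (@is_collision _) E -> 1 < #|T| ->
  graph_connected setT E -> 1 < #|[set w | removable E w]|.
Proof.
move=> collE T2 conn; have /card_gt0P [r _] := ltnW T2.
have [w1 _ rem1] := removable_neq r collE T2 conn.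
have [w2 w21 rem2] := removable_neq w1 collE T2 conn.
by apply/card_gt1P; exists w1, w2; rewrite !inE rem1 rem2 eq_sym.
Qed.
End Collisions.

Section Blocks.
Variable T : finType.
Implicit Types (s : seq {set T}) (p : pred {set T}) (V : {set T}).

Definition ordered_blocks s m (a b : nat -> nat) :=
  (forall i, i < m -> a i <= b i /\ b i < size s) /\
  (forall i, i.+1 < m -> b i < a i.+1).

Lemma ordered_blocks_lt s m a b i j :
  ordered_blocks s m a b -> i < j -> j < m -> b i < a j.
Proof.
move=> [ab_size ab_next]; elim: j => // j IH ij jm.
have [abj _] := ab_size j (ltnW jm); have bj_a := ab_next j jm.
case: (ltnP i j) => ij'; last by have -> : i = j by lia.
by have := IH ij' (ltnW jm); lia.
Qed.

Lemma ordered_blocks_select s m a b (G : pred nat) (L := [seq i <- iota 0 m | G i]) :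
  ordered_blocks s m a b ->
  ordered_blocks s (size L) (a \o nth 0 L) (b \o nth 0 L).
Proof.
move=> ord; have [ab_size _] := ord.
have L_lt j : j < size L -> nth 0 L j < m.
  by move/(mem_nth 0); rewrite mem_filter mem_iota => /andP [_ /andP [_]].
have L_sorted : sorted ltn L.
  by apply: sorted_filter; [exact: ltn_trans | exact: iota_ltn_sorted].
split=> [j jL | j jL]; first exact: ab_size (L_lt j jL).
apply: ordered_blocks_lt ord _ (L_lt _ jL).
by apply: (sorted_ltn_nth ltn_trans 0 L_sorted); rewrite ?inE // ltnW.
Qed.

Lemma block_take s a b : a <= b -> b < size s ->
  block s a b = take (b - a).+1 (drop a s).
Proof. by move=> ab bs; rewrite /block map_nth_iota //; lia. Qed.

Lemma take_block s a b : a <= b -> b < size s ->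
  take b.+1 s = take a s ++ block s a b.
Proof. by move=> ab bs; rewrite block_take // -takeD; congr take; lia. Qed.

Lemma mem_block s l r f : l <= r -> f \in block s l r ->
  exists2 j, l <= j <= r & f = nth set0 s j.
Proof.
by move=> lr /mapP [j]; rewrite mem_iota => /andP [lj jr] ->; exists j => //; lia.
Qed.

Lemma block_visit s (k : T) l r : 1 < #|T| ->
  l <= r -> graph_connected setT (block s l r) ->
  exists2 x, l <= x <= r & k \in nth set0 s x.
Proof.
move=> /card_gt1P [x [y [_ _ xy]]] lr conn.
have [z kz] : exists z, k != z.
  by case: (eqVneq x k) => [<-|xk]; [exists y | exists x; rewrite eq_sym].
have [f /(mem_block lr) [j ljr ->] kf] :=
  connected_mem_edge conn (in_setT k) (in_setT z) kz.
by exists j.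
Qed.

Lemma all_block (P : pred {set T}) s a b :
  all P s -> a <= b -> b < size s -> all P (block s a b).
Proof.
move=> Ps ab bs; apply/allP => f /(mem_block ab) [j /andP [_ jb] ->].
by apply: (allP Ps); apply: mem_nth; apply: leq_ltn_trans jb bs.
Qed.

Lemma count_take_mono p s n n' : n <= n' ->
  count p (take n s) <= count p (take n' s).
Proof.
move=> nn'; rewrite -(take_takel s nn') -{2}(cat_take_drop n (take n' s)).
by rewrite count_cat leq_addr.
Qed.

Lemma filter_block p s a b : a <= b -> b < size s -> has p (block s a b) ->
  filter p (block s a b) =
  block (filter p s) (count p (take a s)) (count p (take b.+1 s)).-1.
Proof.
move=> ab bs; rewrite has_count => pos.
set A := count p (take a s); set B := count p (take b.+1 s).
have BA : B = A + count p (block s a b) by rewrite /B (take_block ab bs) count_cat.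
have Bs : B <= count p s.
  by rewrite -[in X in _ <= X](cat_take_drop b.+1 s) count_cat leq_addr.
have Es : filter p s =
    filter p (take a s) ++ filter p (block s a b) ++ filter p (drop b.+1 s).
  by rewrite -!filter_cat catA -(take_block ab bs) cat_take_drop.
rewrite [RHS]block_take ?size_filter; [|lia|lia].
rewrite Es drop_size_cat ?size_filter // take_size_cat // size_filter; lia.
Qed.

Lemma rich_filter (C : rat) V p s m a b : (C <= m%:R)%R ->
  ordered_blocks s m a b ->
  (forall i, i < m -> has p (block s (a i) (b i)) /\
                      graph_connected V (filter p (block s (a i) (b i)))) ->
  rich C V (filter p s).
Proof.
move=> Cm [ab_size ab_next] blocks_ok.
pose A i := count p (take (a i) s); pose B i := count p (take (b i).+1 s).
have AB i : i < m -> A i < B i.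
  move=> im; have [ab bs] := ab_size i im; have [+ _] := blocks_ok i im.
  by rewrite /B (take_block ab bs) count_cat has_count -/(A i); lia.
exists m, A, (fun i => (B i).-1); split=> //; split; [|split].
- move=> i im; have := AB i im.
  have : B i <= count p s by rewrite -(cat_take_drop (b i).+1 s) count_cat leq_addr.
  by rewrite size_filter; lia.
- move=> i im; have := AB i (ltnW im).
  have : B i <= A i.+1 by apply: count_take_mono; exact: ab_next.
  lia.
- move=> i im; have [ab bs] := ab_size i im; have [has_p conn] := blocks_ok i im.
  by rewrite -filter_block.
Qed.

Lemma rich_filter_select (C : rat) V p s m a b (G : pred nat) : 1 < #|V| ->
  (C <= (count G (iota 0 m))%:R)%R -> ordered_blocks s m a b ->
  (forall i, i < m -> G i -> graph_connected V (filter p (block s (a i) (b i)))) ->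
  rich C V (filter p s).
Proof.
move=> /card_gt1P [x [y [xV yV xy]]] Cm ord conn.
apply: (rich_filter _ (ordered_blocks_select G ord)) => [|j jL].
  by rewrite size_filter.
rewrite /comp; set i := nth 0 _ j.
have /(mem_nth 0) := jL; rewrite -/i mem_filter mem_iota add0n.
case/andP=> Gi /andP [_ im].
have conn_i := conn i im Gi; have [f + _] := connected_mem_edge conn_i xV yV xy.
by rewrite mem_filter => /andP [pf fB]; split; [apply/hasP; exists f | ].
Qed.

End Blocks.

Section Visits.
Variables (T : finType) (s : seq {set T}) (k : T).
Local Notation sg := (nth set0 s).

Definition avoids p q := forall j, p < j -> j < q -> k \notin sg j.

Lemma last_visit x j : x < j -> k \in sg x ->
  exists p, [/\ x <= p < j, k \in sg p & avoids p j].
Proof.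
move=> xj kx; have exP : exists p, (x <= p < j) && (k \in sg p).
  by exists x; rewrite leqnn xj.
have ubP i : (x <= i < j) && (k \in sg i) -> i <= j by case/andP=> /andP [_ /ltnW].
case: (ex_maxnP exP ubP) => p /andP [xpj kp] pmax.
exists p; split=> // i pi ij; apply: contraTN (pi) => ki; rewrite -leqNgt pmax //.
by case/andP: xpj => xp _; rewrite ki andbT ij (leq_trans xp (ltnW pi)).
Qed.

Lemma next_visit j y : j < y -> k \in sg y ->
  exists q, [/\ j < q <= y, k \in sg q & avoids j q].
Proof.
move=> jy ky; have exP : exists q, (j < q <= y) && (k \in sg q).
  by exists y; rewrite leqnn jy.
case: (ex_minnP exP) => q /andP [jqy kq] qmin.
exists q; split=> // i ji iq; apply: contraTN (iq) => ki; rewrite -leqNgt qmin //.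
by case/andP: jqy => _ qy; rewrite ki andbT ji (leq_trans (ltnW iq) qy).
Qed.

Lemma avoids_cat p j q : avoids p j -> k \notin sg j -> avoids j q -> avoids p q.
Proof.
move=> apj kj ajq i pi iq.
by case: (ltngtP i j) => [ij | ji | -> //]; [apply: apj | apply: ajq].
Qed.

Definition isolated_visits := forall p q, p < q -> q < size s ->
  k \in sg p -> k \in sg q -> avoids p q ->
  sg p = sg q /\ (forall j, p < j -> j < q -> sg p :&: sg j = set0).

Lemma isolated_visits_between x y : isolated_visits -> y < size s ->
  k \in sg x -> k \in sg y -> forall j, x <= j <= y ->
  (k \in sg j -> sg j = sg x) /\ (k \notin sg j -> sg j :&: sg x = set0).
Proof.
move=> iso ys kx ky j; have [n] := ubnP j; elim: n j => // n IH j jn /andP [xj jy].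
case: (eqVneq j x) => [->|jx]; first by split=> // /negP.
have [p [/andP [xp pj] kp apj]] : exists p, [/\ x <= p < j, k \in sg p & avoids p j].
  by apply: last_visit kx; rewrite ltn_neqAle eq_sym jx.
have xpy : x <= p <= y by rewrite xp (leq_trans (ltnW pj) jy).
have [/(_ kp) spx _] := IH p (leq_trans pj jn) xpy.
rewrite -spx; split=> kj.
  by have [] := iso p j pj (leq_ltn_trans jy ys) kp kj apj.
have jy' : j < y by rewrite ltn_neqAle jy andbT; apply: contraNneq kj => ->.
have [q [/andP [jq qy] kq ajq]] := next_visit jy' ky.
have apq := avoids_cat apj kj ajq.
have [_ disj] := iso p q (ltn_trans pj jq) (leq_ltn_trans qy ys) kp kq apq.
by rewrite setIC; apply: disj.
Qed.

Lemma exists_visit_pair x l r y : 2 < #|T| -> all (@is_collision _) s ->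
  x < l -> l <= r -> r < y -> y < size s -> k \in sg x -> k \in sg y ->
  graph_connected setT (block s l r) ->
  exists p q, [/\ p < q < size s, (k \in sg p) && (k \in sg q), avoids p q
    & (sg p = sg q -> exists j, [/\ p < j, j < q & sg p :&: sg j != set0])].
Proof.
move=> T3 coll xl lr ry ys kx ky conn; apply: NNPP => no_pair.
have iso : isolated_visits.
  move=> p q pq qs kp kq apq.
  have epq : sg p = sg q.
    apply/eqP; apply: contraT => neq; case: no_pair; exists p, q.
    by split; rewrite ?pq ?qs ?kp ?kq // => /eqP; rewrite (negbTE neq).
  split=> // j pj jq; apply/eqP; apply: contraT => meet; case: no_pair.
  by exists p, q; split; rewrite ?pq ?qs ?kp ?kq //; exists j.
have [w wx] : exists w, w \notin sg x.
  have xs : x < size s by lia.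
  have /eqP x2 := allP coll _ (mem_nth set0 xs).
  have /card_gt0P [w] : 0 < #|~: sg x| by have := cardsC (sg x); rewrite x2; lia.
  by rewrite inE; exists w.
have [u [v [ux vx /hasP [f /(mem_block lr) [j ljr ->]]]]] :=
  connect_exit (A := fun z => z \in sg x) (conn k w (in_setT k) (in_setT w)) kx wx.
case/andP=> /andP [uj vj] _.
have xjy : x <= j <= y by lia.
have [eq_j disj_j] := isolated_visits_between iso ys kx ky xjy.
case: (boolP (k \in sg j)) => kj; first by move: vx; rewrite -(eq_j kj) vj.
by have /setP/(_ u) := disj_j kj; rewrite !inE uj ux.
Qed.

Lemma exists_visit_pair_blocks m a b : 2 < #|T| -> all (@is_collision _) s ->
  ordered_blocks s m a b -> 2 < m ->
  (forall i, i < m -> graph_connected setT (block s (a i) (b i))) ->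
  exists p q, [/\ p < q < size s, (k \in sg p) && (k \in sg q), avoids p q
    & (sg p = sg q -> exists j, [/\ p < j, j < q & sg p :&: sg j != set0])].
Proof.
move=> T3 coll [ab_size ab_next] m3 conn.
have m1 : 0 < m by apply: leq_trans m3.
have [ab0 _] := ab_size 0 m1; have [ab1 _] := ab_size 1 (ltnW m3).
have [ab2 bs2] := ab_size 2 m3.
have b0a1 := ab_next 0 (ltnW m3); have b1a2 := ab_next 1 m3.
have T2 : 1 < #|T| by apply: ltnW.
have [x /andP [_ xb0] kx] := block_visit k T2 ab0 (conn 0 m1).
have [y /andP [a2y yb2] ky] := block_visit k T2 ab2 (conn 2 m3).
have [xa1 b1y ys] : [/\ x < a 1, b 1 < y & y < size s] by split; lia.
exact: exists_visit_pair T3 coll xa1 ab1 b1y ys kx ky (conn 1 (ltnW m3)).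
Qed.

End Visits.



Lemma count_iota_sum (P : pred nat) m : count P (iota 0 m) = \sum_(i < m) P i.
Proof.
rewrite -sum1_count big_mkcond -(big_mkord predT (fun i => nat_of_bool (P i))).
by rewrite /index_iota subn0.
Qed.

Lemma exists_frequent (T : finType) (x0 : T) m (F : nat -> {set T}) :
  (forall i, i < m -> 1 < #|F i|) ->
  exists k, 2 * m <= #|T| * count (fun i => k \in F i) (iota 0 m).
Proof.
move=> F2; pose c k := count (fun i => k \in F i) (iota 0 m).
exists [arg max_(k > x0) c k]; case: arg_maxnP => // kmax _ cmax.
have sum_c : \sum_(k : T) c k <= #|T| * c kmax.
  by rewrite -sum_nat_const; apply: leq_sum => k _; apply: cmax.
apply: leq_trans sum_c; rewrite /c; under eq_bigr do rewrite count_iota_sum.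
have -> : 2 * m = \sum_(i < m) 2 by rewrite big_const_ord iter_addn_0 mulnC.
rewrite exchange_big /=; apply: leq_sum => i _; apply: leq_trans (F2 i (ltn_ord i)) _.
by rewrite -sum1_card big_mkcond /=; apply: leq_sum => k _; case: ifP.
Qed.

Section Constant.
Local Open Scope ring_scope.

Lemma Cconst_rec n : (2 < n)%N -> Cconst n = n%:R / 2 * (2 * Cconst n.-1 + 1).
Proof. by case: n => [|[|[|n]]]. Qed.

Lemma Cconst_ge1 n : 1 <= Cconst n.
Proof.
elim: n => [|[|[|n]]] // IH; rewrite Cconst_rec //.
have : 3 <= n.+3%:R :> rat by rewrite ler_nat.
nra.
Qed.

Lemma Cconst_gt2 n : (2 < n)%N -> 2 < Cconst n.
Proof.
move=> n3; rewrite Cconst_rec //; have := Cconst_ge1 n.-1.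
have : 3 <= n%:R :> rat by rewrite ler_nat.
nra.
Qed.

Lemma Cconst_pred_le n m c : (2 < n)%N ->
  Cconst n <= m%:R -> (2 * m <= n * c)%N -> 2 * Cconst n.-1 + 1 <= c%:R.
Proof.
move=> n3; rewrite Cconst_rec // -(ler_nat rat) !natrM.
have : 3 <= n%:R :> rat by rewrite ler_nat.
nra.
Qed.

End Constant.

Theorem lemma3p1 (N : nat) (s : seq {set 'I_N}) :
  3 <= N ->
  all (@is_collision _) s ->
  rich (Cconst N) [set: 'I_N] s ->
  exists (k : 'I_N) (p q : nat),
    [/\ p < q < size s,
        (k \in nth set0 s p) && (k \in nth set0 s q),
        (forall j, p < j -> j < q -> k \notin nth set0 s j),
        (nth set0 s p = nth set0 s q ->
           exists j, [/\ p < j, j < q & nth set0 s p :&: nth set0 s j != set0])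
      & rich (2 * Cconst N.-1 + 1)%R ([set: 'I_N] :\ k)
             [seq e <- s | (k \notin (e : {set 'I_N}))]].
Proof.
move=> N3 coll [m [a [b [Cm [ab_size [ab_next conn]]]]]].
have ord : ordered_blocks s m a b by [].
have TN : #|'I_N| = N := card_ord N.
have m3 : 2 < m by rewrite -(ltr_nat rat); apply: lt_le_trans (Cconst_gt2 N3) Cm.
pose F i := [set w | removable (block s (a i) (b i)) w].
have F2 i : i < m -> 1 < #|F i|.
  move=> im; have [ab bs] := ab_size i im.
  by apply: card_removable; [exact: all_block | rewrite TN; lia | exact: conn].
have [k freq] := exists_frequent (Ordinal (ltnW (ltnW N3))) F2.
have T3 : 2 < #|'I_N| by rewrite TN.
have [p [q [pqs kpq apq meet]]] := exists_visit_pair_blocks k T3 coll ord m3 conn.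
exists k, p, q; split=> //.
apply: (rich_filter_select (G := fun i => k \in F i)) ord _ => [|| i im].
- have := cardsD1 k [set: 'I_N]; rewrite in_setT cardsT TN add1n => E.
  by rewrite -ltnS -E.
- by apply: (Cconst_pred_le N3 Cm); move: freq; rewrite TN.
- by rewrite /F inE => /graph_connectedP.
Qed.
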